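(* Let $(X,d)$ be a compact doubling metric space with $\operatorname{diam}(X,d)=1/2$ and $\mathcal S$ a hyperbolic filling with parameters $a\ge\lambda\ge6$. Let $\rho:\mathcal S\to(0,\infty)$ satisfy (H1) and (H4) (with exponent $p$), and let $C\ge\eta_-^{-p}$. Let $k\ge0$ and let $\mu_k$ be a $(C,\pi)$-balanced probability mass function on $\mathcal S_k$. Then there exists a probability mass function $\mu_{k+1}$ on $\mathcal S_{k+1}$ such that: (1) the pair $(\mu_k,\mu_{k+1})$ is $(C,\pi)$-compatible; (2) $\mu_{k+1}$ is $(C,\pi)$-balanced; (3) there is a probability measure $\mu_{k,k+1}$ on $X\times X$ whose marginals (pushforwards under the two coordinate projections) are $\tilde\mu_k=\sum_{u\in\mathcal S_k}\mu_k(u)\delta_{\pi_1(u)}$ and $\tilde\mu_{k+1}=\sum_{v\in\mathcal S_{k+1}}\mu_{k+1}(v)\delta_{\pi_1(v)}$, and such that $\mu_{k,k+1}(\{(x_1,x_2)\in X\times X:d(x_1,x_2)\ge(1+2\lambda a^{-1})a^{-k}\})=0$.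
   Context: Hyperbolic filling: $X_0\subset X_1\subset\cdots$ increasing, $X_n$ maximal $a^{-n}$-separated in $X$ ($X_0=\{x_0\}$); $\mathcal S_n=\{(x,n):x\in X_n\}$, $\mathcal S=\bigcup_n\mathcal S_n$, $\pi_1(x,n)=x$, $v_0=(x_0,0)$. Each $(x,n)$, $n\ge1$, has a fixed parent $(y,n-1)$ with $d(x,y)=\min_{z\in X_{n-1}}d(x,z)$; descendants iterate the child relation; $\mathcal D_n(v)$ = descendants of $v$ in $\mathcal S_n$; genealogy $g(v)=(v_0,\dots,v_k=v)$ with $v_i$ parent of $v_{i+1}$. $D_2$: graph distance for the graph with edges vertex–parent and horizontal edges between distinct $(x,n),(y,n)$ with $B(x,\lambda a^{-n})\cap B(y,\lambda a^{-n})\ne\emptyset$. $\delta_x$ is the Dirac mass at $x$. $\pi(v)=\prod_{w\in g(v)}\rho(w)$. (H1) $0<\eta_-\le\rho\le\eta_+<1$. (H4) $\sum_{w\in\mathcal D_n(v)}\pi(w)^p\le\pi(v)^p$ for all $v\in\mathcal S_m$, $n>m$. A function $f:\mathcal S_k\to(0,\infty)$ is $(C,\pi)$-balanced if $f(u)/\pi(u)^p\le C^2f(v)/\pi(v)^p$ for all $u,v\in\mathcal S_k$ with $D_2(u,v)=1$. A pair $f_0:\mathcal S_k\to(0,\infty)$, $f_1:\mathcal S_{k+1}\to(0,\infty)$ is $(C,\pi)$-compatible if $f_0(u)/\pi(u)^p\le f_1(v)/\pi(v)^p\le Cf_0(u)/\pi(u)^p$ whenever $u\in\mathcal S_k$ is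 the parent of $v\in\mathcal S_{k+1}$. *)

From HB Require Import structures.
From mathcomp Require Import all_boot all_order all_algebra.
From mathcomp Require Import reals exp.
From Stdlib Require List.
Set Implicit Arguments. Unset Strict Implicit. Unset Printing Implicit Defensive.
Import Order.TTheory GRing.Theory Num.Theory.
Local Open Scope ring_scope.

Section HF.
Variables (R : realType) (X : eqType) (d : X -> X -> R).

Definition is_metric : Prop :=
  [/\ forall x y, 0 <= d x y,
      forall x y, d x y = 0 <-> x = y,
      forall x y, d x y = d y x &
      forall x y z, d x z <= d x y + d y z].

Definition d_open (U : X -> Prop) : Prop :=
  forall x, U x -> exists2 e : R, 0 < e & forall y, d x y < e -> U y.

Definition d_compact : Prop :=
  forall (I : Type) (U : I -> X -> Prop),
    (forall i, d_open (U i)) -> (forall x, exists i, U i x) ->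
    exists s : seq I, forall x, exists2 i, Stdlib.Lists.List.In i s & U i x.

Definition d_doubling : Prop :=
  exists N : nat, forall (x : X) (r : R), 0 < r ->
    exists s : seq X, (size s <= N)%N /\
      forall y, d x y < r -> exists2 z, z \in s & d z y < r / 2.

Definition diam_eq (D : R) : Prop :=
  (forall x y, d x y <= D) /\
  (forall e : R, 0 < e -> exists x y, D - e < d x y).

Definition separated (A : X -> Prop) (r : R) : Prop :=
  forall x y, A x -> A y -> x <> y -> r <= d x y.

Definition maximal_separated (A : X -> Prop) (r : R) : Prop :=
  separated A r /\
  forall B : X -> Prop, (forall x, A x -> B x) -> separated B r ->
    forall x, B x -> A x.

(* Hyperbolic filling data.  The level-n vertex set S_n = {(x,n) : x in X_n}
   is encoded by the duplicate-free list Xs n (= X_n); the parent of the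
   vertex (x,n), n >= 1, is (parent x n, n-1). *)
Definition hyperbolic_filling (a : R) (x0 : X) (Xs : nat -> seq X)
  (parent : X -> nat -> X) : Prop :=
  [/\ Xs 0%N = [:: x0],
      forall n, uniq (Xs n),
      forall n, {subset Xs n <= Xs n.+1},
      forall n, maximal_separated (fun x => x \in Xs n) (a ^- n) &
      forall n x, x \in Xs n.+1 ->
        parent x n.+1 \in Xs n /\
        forall z, z \in Xs n -> d x (parent x n.+1) <= d x z].

Fixpoint anc (parent : X -> nat -> X) (x : X) (n j : nat) : X :=
  match j with
  | 0%N => x
  | j'.+1 => anc parent (parent x n) n.-1 j'
  end.

Definition descendant (parent : X -> nat -> X) (w : X) (n : nat) (y : X)
  (m : nat) : bool :=
  (m < n)%N && (anc parent w n (n - m) == y).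

Fixpoint pi_ (parent : X -> nat -> X) (rho : X -> nat -> R) (x : X) (n : nat)
  : R :=
  match n with
  | 0%N => rho x 0%N
  | n'.+1 => rho x n * pi_ parent rho (parent x n) n'
  end.

Definition balls_meet (lam a : R) (x y : X) (n : nat) : Prop :=
  exists z, d x z < lam * a ^- n /\ d y z < lam * a ^- n.

Definition D2_edge (Xs : nat -> seq X) (parent : X -> nat -> X) (lam a : R)
  (u : X * nat) (v : X * nat) : Prop :=
  [/\ u.1 \in Xs u.2, v.1 \in Xs v.2 &
   [\/ v.2 = u.2.+1 /\ parent v.1 v.2 = u.1,
       u.2 = v.2.+1 /\ parent u.1 u.2 = v.1 |
       [/\ u.2 = v.2, u.1 <> v.1 & balls_meet lam a u.1 v.1 u.2]]].

(* D_2(u,v) = 1 : graph distance one, i.e. u <> v adjacent *)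
Definition D2_eq1 (Xs : nat -> seq X) (parent : X -> nat -> X) (lam a : R) (u v : X * nat) : Prop :=
  u <> v /\ D2_edge Xs parent lam a u v.

Definition pos_pmf (Xs : nat -> seq X) (k : nat) (f : X -> R) : Prop :=
  (forall x, x \in Xs k -> 0 < f x) /\ \sum_(x <- Xs k) f x = 1.

Definition balanced (Xs : nat -> seq X) (parent : X -> nat -> X)
  (rho : X -> nat -> R) (lam a p C : R) (k : nat) (f : X -> R)
  : Prop :=
  (forall x, x \in Xs k -> 0 < f x) /\
  forall u v, u \in Xs k -> v \in Xs k ->
    D2_eq1 Xs parent lam a (u, k) (v, k) ->
    f u / powR (pi_ parent rho u k) p <=
      C ^+ 2 * (f v / powR (pi_ parent rho v k) p).

Definition compatible (Xs : nat -> seq X) (parent : X -> nat -> X)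
  (rho : X -> nat -> R) (p C : R) (k : nat) (f0 f1 : X -> R)
  : Prop :=
  [/\ forall x, x \in Xs k -> 0 < f0 x,
      forall x, x \in Xs k.+1 -> 0 < f1 x &
      forall v, v \in Xs k.+1 ->
        let u := parent v k.+1 in
        f0 u / powR (pi_ parent rho u k) p <=
          f1 v / powR (pi_ parent rho v k.+1) p <=
          C * (f0 u / powR (pi_ parent rho u k) p)].

(* A probability measure on X x X supported on finitely many atoms:
   gamma x y is the mass of the atom (x,y). *)
Definition coupling_near (Xs : nat -> seq X) (k : nat) (mu0 mu1 : X -> R)
  (bound : R) (gamma : X -> X -> R) : Prop :=
  [/\ forall x y, 0 <= gamma x y,
      forall x y, gamma x y != 0 -> x \in Xs k /\ y \in Xs k.+1,
      forall x, x \in Xs k -> \sum_(y <- Xs k.+1) gamma x y = mu0 x,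
      forall y, y \in Xs k.+1 -> \sum_(x <- Xs k) gamma x y = mu1 y &
      forall x y, gamma x y != 0 -> d x y < bound].

End HF.

From Pilot Require Import Defs.
From HB Require Import structures.
From mathcomp Require Import all_boot all_order all_algebra.
From mathcomp Require Import reals exp.
From mathcomp Require Import boolp classical_sets topology normedtype.
From mathcomp Require Import ring lra.

Set Implicit Arguments.
Unset Strict Implicit.
Unset Printing Implicit Defensive.

Import Order.TTheory GRing.Theory Num.Theory numFieldNormedType.Exports.
Local Open Scope ring_scope.

(* Let m(u) = mu_k(u) / pi(u)^p be the density of mu_k.  A vertex u of
   level k is its own child, so (H1), (H4) and C >= eta_-^(-p) show that the
   total weight S(u) of the children of u satisfies S(u) <= pi(u)^p <= C S(u).
   Spreading mu_k(u) evenly (in density) over the children of u is compatible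
   and moves mass by less than a^-k, but is only C^3-balanced.  So the
   vertices u of level k are processed by increasing m(u): u gives the
   density l(u) in [m(u), C m(u)] to its own children and raises to
   l(u) / C^2 the density of every vertex y of level k+1 within distance
   a^-k + 2 lam a^-(k+1) of u whose parent has density below m(u) / C (that
   parent has been processed before u); l(u) is chosen by the intermediate
   value theorem so that u spends exactly mu_k(u).  The new density of y is
   the largest density it received, and the masses sent from u to y form the
   coupling. *)

Section OrderLemmas.
Context {disp : Order.disp_t} {T : orderType disp}.

Lemma bigmax_rcons (I : Type) (r : seq I) (y : I) (P : pred I) (F : I -> T) (x : T) :
  \big[Order.max/x]_(i <- rcons r y | P i) F i =
  if P y then Order.max (F y) (\big[Order.max/x]_(i <- r | P i) F i)
  else \big[Order.max/x]_(i <- r | P i) F i.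
Proof.
rewrite big_rcons_op; case: (P y) => //=.
elim: r => [|i r IH]; rewrite ?big_nil ?big_cons //.
by case: (P i); rewrite IH // maxCA.
Qed.

Lemma index_sort_lt (I : eqType) (m : I -> T) (s : seq I) x y :
  x \in s -> y \in s -> (m x < m y)%O ->
  (index x (sort (relpre m <=%O) s) < index y (sort (relpre m <=%O) s))%N.
Proof.
set L := sort _ s => xs ys mxy; rewrite ltnNge; apply/negP => le_yx.
have sortedL : sorted (relpre m <=%O) L by apply: sort_sorted => a b; exact: le_total.
have := @sorted_leq_nth _ (relpre m <=%O) (fun b a c => @le_trans _ _ (m b) (m a) (m c))
  (fun a => lexx (m a)) x L sortedL (index y L) (index x L).
rewrite !inE !index_mem !mem_sort xs ys !nth_index ?mem_sort // => /(_ isT isT le_yx).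
by rewrite /= leNgt mxy.
Qed.

End OrderLemmas.

Lemma sequential_choice (I : eqType) (V : Type) (s : seq I) (v0 : V)
    (G : (I -> V) -> I -> V -> Prop) :
  uniq s ->
  (forall f g u l, u \in s ->
     {in s, forall z, (index z s < index u s)%N -> f z = g z} -> G f u l -> G g u l) ->
  (forall f u, u \in s ->
     {in s, forall z, (index z s < index u s)%N -> G f z (f z)} -> exists l, G f u l) ->
  exists f : I -> V, {in s, forall u, G f u (f u)}.
Proof.
move=> us G_local G_step.
suff Gn n : exists f : I -> V, {in take n s, forall u, G f u (f u)}.
  by have [f] := Gn (size s); rewrite take_size; exists f.
elim: n => [|n [f Gf]]; first by exists (fun=> v0) => u; rewrite take0.
have [le_sn | lt_ns] := leqP (size s) n.
  by exists f; rewrite take_oversize ?(leq_trans le_sn) // -(take_oversize le_sn).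
have /hasP[x0 _ _] : has predT s by rewrite has_predT (leq_ltn_trans _ lt_ns).
set u := nth x0 s n; have us_mem : u \in s by exact: mem_nth.
have idx_u : index u s = n by exact: index_uniq.
have earlier z : z \in s -> (z \in take n s) = (index z s < index u s)%N.
  by move=> zs; rewrite in_take // idx_u.
have [l Gl] : exists l, G f u l.
  by apply: G_step => // z zs lt_zu; apply: Gf; rewrite earlier.
pose g z := if z == u then l else f z.
have g_f z : z \in s -> (index z s < index u s)%N -> f z = g z.
  by move=> _ lt_zu; rewrite /g ifN //; apply: contraTneq lt_zu => ->; rewrite ltnn.
exists g; rewrite (take_nth x0 lt_ns) -/u => z; rewrite mem_rcons inE.
case/predU1P => [-> | zt].
  by rewrite /g eqxx; apply: G_local Gl.
have zs : z \in s by exact: mem_take zt.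
rewrite -g_f -?earlier //; apply: G_local (Gf z zt) => // z' z's lt_z'z.
by apply: g_f => //; apply: ltn_trans lt_z'z _; rewrite -earlier.
Qed.

Section Telescope.
Variable R : realDomainType.

Lemma telescope_bigmax (I : eqType) (s : seq I) (P : pred I) (F : I -> R) (x : R) :
  uniq s ->
  \sum_(i <- s | P i)
     Num.max 0 (F i - \big[Num.max/x]_(j <- s | P j && (index j s < index i s)%N) F j)
  = \big[Num.max/x]_(j <- s | P j) F j - x.
Proof.
elim/last_ind: s => [|s y IH]; first by rewrite !big_nil subrr.
rewrite rcons_uniq => /andP[ys us].
have idx_s j : j \in s -> index j (rcons s y) = index j s.
  by move=> js; rewrite -cats1 index_cat js.
have idx_y : index y (rcons s y) = size s.
  by rewrite -cats1 index_cat (negbTE ys) /= eqxx addn0.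
have before_y j : (index j (rcons s y) < size s)%N = (j \in s).
  rewrite -cats1 index_cat; case: ifP => js; first by rewrite index_mem.
  by rewrite ltnNge leq_addr.
set M := \big[Num.max/x]_(j <- s | P j) F j.
have max_before_y :
    \big[Num.max/x]_(j <- rcons s y | P j && (index j (rcons s y) < size s)%N) F j = M.
  rewrite bigmax_rcons idx_y ltnn andbF big_seq_cond [M]big_seq_cond.
  by apply: eq_bigl => j; case js: (j \in s); rewrite ?andbF //= before_y js !andbT.
have sum_s : \sum_(i <- s | P i) Num.max 0 (F i - \big[Num.max/x]_(j <- rcons s y |
      P j && (index j (rcons s y) < index i (rcons s y))%N) F j) = M - x.
  rewrite -IH // big_seq_cond [RHS]big_seq_cond; apply: eq_bigr => i /andP[i_s _].
  rewrite bigmax_rcons idx_y idx_s // ifN; last by rewrite negb_and -leqNgt index_size orbT.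
  congr (Num.max 0 (_ - _)); rewrite big_seq_cond [RHS]big_seq_cond.
  by apply: eq_bigl => j; case js: (j \in s); rewrite ?andbF //= idx_s.
rewrite big_rcons sum_s idx_y max_before_y bigmax_rcons -/M /=.
case: (P y); last by rewrite addr0.
have [le_yM | lt_My] := leP (F y) M.
  by rewrite (max_idPl _) ?addr0 // subr_le0.
by rewrite (max_idPr _) ?subr_ge0 ?(ltW lt_My) //; lra.
Qed.

End Telescope.

Section Continuity.
Variable R : realType.
Local Open Scope classical_set_scope.

Lemma continuous_hinge_sum (I : Type) (s : seq I) (P : pred I) (A c : R)
    (K Q : I -> R) :
  continuous (fun l : R => l * A + \sum_(i <- s | P i) Num.max 0 (l * c - K i) * Q i).
Proof.
have lin b : continuous (fun l : R => l * b).
  by move=> x; apply: cvgM; [exact: cvg_id | exact: cvg_cst].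
have hinge i : continuous (fun l : R => Num.max 0 (l * c - K i)).
  apply: max_fun_continuous; first exact: cst_continuous.
  by move=> x; apply: cvgB; [exact: lin | exact: cvg_cst].
move=> x; apply: cvgD; first exact: lin.
apply: (continuous_big add_continuous) => i _ y.
by apply: cvgM; [exact: hinge | exact: cvg_cst].
Qed.

Lemma continuous_ivt (f : R -> R) (lo hi v : R) : continuous f -> lo <= hi ->
  f lo <= v <= f hi -> exists2 l, lo <= l <= hi & f l = v.
Proof.
move=> fc lohi /andP[flo fhi].
have fcI : {within `[lo, hi], continuous f} by exact: continuous_subspaceT.
have vI : Num.min (f lo) (f hi) <= v <= Num.max (f lo) (f hi).
  by rewrite ge_min flo le_max fhi orbT.
have [l] := IVT lohi fcI vI; rewrite in_itv /= => lI flv.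
by exists l.
Qed.

End Continuity.

Section Metric.
Variables (R : realType) (X : eqType) (d : X -> X -> R).
Hypothesis d_metric : is_metric d.

Lemma dist_ge0 x y : 0 <= d x y. Proof. by case: d_metric. Qed.
Lemma dist_xx x : d x x = 0. Proof. by case: d_metric => _ d0 _ _; apply/d0. Qed.
Lemma dist0_eq x y : d x y = 0 -> x = y. Proof. by case: d_metric => _ d0 _ _ /d0. Qed.
Lemma distC x y : d x y = d y x. Proof. by case: d_metric. Qed.
Lemma dist_triangle x y z : d x z <= d x y + d y z. Proof. by case: d_metric. Qed.

Lemma maximal_separated_near (A : X -> Prop) (r : R) x :
  maximal_separated d A r -> 0 < r -> exists2 z, A z & d x z < r.
Proof.
move=> [sepA maxA] r_gt0; apply/not_exists2P => far.
have far_le z : A z -> r <= d x z.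
  by move=> Az; rewrite leNgt; apply/negP; case: (far z).
have sepAx : Defs.separated d (fun y => A y \/ y = x) r.
  move=> y z [Ay|->] [Az|->] neq_yz //; first exact: sepA.
  - by rewrite distC; apply: far_le.
  - exact: far_le.
have Ax : A x := maxA _ (fun y Ay => or_introl Ay) sepAx x (or_intror erefl).
by have := far_le x Ax; rewrite dist_xx leNgt r_gt0.
Qed.

Lemma D2_eq1_dist Xs parent (lam a : R) u v n :
  D2_eq1 d Xs parent lam a (u, n) (v, n) -> d u v < 2 * (lam * a ^- n).
Proof.
case=> _ [_ _ [[/= /eqP] | [/= /eqP] | [_ _ [z [duz dvz]]]]]; rewrite ?eqSS ?ltn_eqF //.
by apply: le_lt_trans (dist_triangle u z v) _; rewrite (distC z) mulr2n mulrDl mul1r ltrD.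
Qed.

Lemma D2_eq1_of_dist Xs parent (lam a : R) u v n :
  u \in Xs n -> v \in Xs n -> u != v -> d u v < lam * a ^- n ->
  D2_eq1 d Xs parent lam a (u, n) (v, n).
Proof.
move=> un vn /eqP neq_uv duv; split; first by case.
split=> //; apply: Or33; split=> //; exists v; split=> //.
by rewrite dist_xx (le_lt_trans (dist_ge0 u v)).
Qed.

Section Filling.
Variables (a : R) (x0 : X) (Xs : nat -> seq X) (parent : X -> nat -> X).
Hypothesis filling : hyperbolic_filling d a x0 Xs parent.

Lemma uniq_level n : uniq (Xs n). Proof. by case: filling. Qed.

Lemma level_subset n : {subset Xs n <= Xs n.+1}. Proof. by case: filling. Qed.

Lemma root_mem n : x0 \in Xs n.
Proof.
case: filling => X0 _ _ _ _; elim: n => [|n]; first by rewrite X0 mem_seq1.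
exact: level_subset.
Qed.

Lemma parent_mem n x : x \in Xs n.+1 -> parent x n.+1 \in Xs n.
Proof. by case: filling => _ _ _ _ par /par[]. Qed.

Lemma parent_nearest n x z : x \in Xs n.+1 -> z \in Xs n -> d x (parent x n.+1) <= d x z.
Proof. by case: filling => _ _ _ _ par /par[_]; apply. Qed.

Lemma parent_id n x : x \in Xs n -> parent x n.+1 = x.
Proof.
move=> xn; have := parent_nearest (level_subset xn) xn; rewrite dist_xx => le0.
by apply/esym/dist0_eq/le_anti; rewrite le0 dist_ge0.
Qed.

Lemma dist_parent_lt n x : 0 < a -> x \in Xs n.+1 -> d x (parent x n.+1) < a ^- n.
Proof.
move=> a_gt0 xn1.
have sepn : maximal_separated d (fun z => z \in Xs n) (a ^- n) by case: filling.
have [|z zn dxz] := maximal_separated_near x sepn; first by rewrite invr_gt0 exprn_gt0.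
exact: le_lt_trans (parent_nearest xn1 zn) dxz.
Qed.

Lemma pi_gt0 (rho : X -> nat -> R) n x :
  (forall n x, x \in Xs n -> 0 < rho x n) -> x \in Xs n -> 0 < pi_ parent rho x n.
Proof.
move=> rho_gt0; elim: n x => [|n IH] x xn /=; first exact: rho_gt0.
by rewrite mulr_gt0 ?rho_gt0 ?IH ?parent_mem.
Qed.


Lemma descendant_parent w y n :
  descendant parent w n.+1 y n = (parent w n.+1 == y).
Proof. by rewrite /descendant subSnn ltnSn. Qed.

End Filling.
End Metric.

Section NextLevel.
Variables (R : realType) (X : eqType) (d : X -> X -> R) (a lam : R) (x0 : X)
  (Xs : nat -> seq X) (parent : X -> nat -> X) (rho : X -> nat -> R)
  (eta_m eta_p p C : R) (k : nat) (mu : X -> R).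
Hypotheses (d_metric : is_metric d) (lam_ge6 : 6 <= lam) (lam_le_a : lam <= a)
  (filling : hyperbolic_filling d a x0 Xs parent)
  (eta_m_gt0 : 0 < eta_m) (eta_p_lt1 : eta_p < 1)
  (rho_bounds : forall n x, x \in Xs n -> eta_m <= rho x n <= eta_p)
  (C_ge : powR eta_m (- p) <= C)
  (mu_pmf : pos_pmf Xs k mu)
  (mu_balanced : balanced d Xs parent rho lam a p C k mu).

Let par w := parent w k.+1.
Let P u := powR (pi_ parent rho u k) p.
Let Q w := powR (pi_ parent rho w k.+1) p.
Let S u := \sum_(w <- Xs k.+1 | par w == u) Q w.
(* (H4) for the levels k and k+1. *)
Hypothesis children_mass : forall u, u \in Xs k -> S u <= P u.

Let m u := mu u / P u.
Let e := a ^- k.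
Let h := lam * a ^- k.+1.
Let B := e + 2 * h.

Lemma a_gt0 : 0 < a. Proof. by have := lam_ge6; have := lam_le_a; lra. Qed.
Lemma e_gt0 : 0 < e. Proof. by rewrite invr_gt0 exprn_gt0 ?a_gt0. Qed.
Lemma h_gt0 : 0 < h.
Proof. by rewrite mulr_gt0 ?invr_gt0 ?exprn_gt0 ?a_gt0 //; have := lam_ge6; lra. Qed.

Lemma B_eq : (1 + 2 * lam / a) * a ^- k = B.
Proof. by rewrite /B /e /h exprSr invfM; ring. Qed.

(* The only place where lam >= 6 is used: B + 2 h + e <= 2 e + 4 h <= 6 e. *)
Lemma dist_budget : B + 2 * h + e <= lam * e.
Proof.
have le_he : h <= e.
  have a_ge0 := ltW a_gt0.
  rewrite /h /e exprSr invfM mulrCA -[leRHS]mulr1 ler_wpM2l ?invr_ge0 ?exprn_ge0 //.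
  by rewrite ler_pdivrMr ?a_gt0 // mul1r.
have := e_gt0; have := lam_ge6; rewrite /B; nra.
Qed.

Lemma par_mem w : w \in Xs k.+1 -> par w \in Xs k.
Proof. exact: (parent_mem filling). Qed.

Lemma dist_par w : w \in Xs k.+1 -> d w (par w) < e.
Proof. exact: (dist_parent_lt d_metric filling a_gt0). Qed.

Lemma par_id u : u \in Xs k -> par u = u.
Proof. exact: (parent_id d_metric filling). Qed.

Lemma rho_gt0 n x : x \in Xs n -> 0 < rho x n.
Proof. by move=> /rho_bounds /andP[/(lt_le_trans eta_m_gt0)]. Qed.

Lemma P_gt0 u : u \in Xs k -> 0 < P u.
Proof. by move=> uk; rewrite powR_gt0 // (pi_gt0 filling rho_gt0). Qed.

Lemma Q_gt0 w : w \in Xs k.+1 -> 0 < Q w.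
Proof. by move=> wk1; rewrite powR_gt0 // (pi_gt0 filling rho_gt0). Qed.

Lemma Q_eq w : w \in Xs k.+1 -> Q w = rho w k.+1 `^ p * P (par w).
Proof.
move=> wk1; have rho_ge0 := ltW (rho_gt0 wk1).
have pi_ge0 := ltW (pi_gt0 filling rho_gt0 (par_mem wk1)).
by rewrite /Q /= powRM.
Qed.

Lemma Q_le_S u : u \in Xs k -> Q u <= S u.
Proof.
move=> uk; have uk1 := level_subset filling uk.
rewrite /S big_mkcond (bigD1_seq u) ?(uniq_level filling) //=.
rewrite (par_id uk) eqxx lerDl sumr_ge0 // => w _.
by case: ifP; rewrite ?powR_ge0.
Qed.

(* If p < 0 then rho^p > 1, and a vertex u of level k, being its own child,
   would violate (H4): pi(u)^p < rho(u)^p pi(u)^p <= S(u) <= pi(u)^p. *)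
Lemma p_ge0 : 0 <= p.
Proof.
rewrite leNgt; apply/negP => p_lt0.
have x0k := root_mem filling k; have x0k1 := level_subset filling x0k.
have /andP[_ rho_le] := rho_bounds x0k1.
have rho_p_gt1 : 1 < rho x0 k.+1 `^ p.
  rewrite /powR gt_eqF ?rho_gt0 // expR_gt1 nmulr_lgt0 //.
  by rewrite ln_lt0 // rho_gt0 // (le_lt_trans rho_le).
have := le_trans (Q_le_S x0k) (children_mass x0k).
rewrite Q_eq // (par_id x0k) ger_pMl ?P_gt0 //.
by rewrite leNgt rho_p_gt1.
Qed.

Lemma C_gt0 : 0 < C.
Proof. by apply: lt_le_trans C_ge; rewrite powR_gt0. Qed.

Lemma one_le_C_rho w : w \in Xs k.+1 -> 1 <= C * rho w k.+1 `^ p.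
Proof.
move=> wk1; have /andP[eta_le _] := rho_bounds wk1.
apply: le_trans (_ : C * eta_m `^ p <= _).
  by rewrite -ler_pdivrMr ?powR_gt0 // div1r -powRN.
rewrite ler_wpM2l ?(ltW C_gt0) //; apply: (ge0_ler_powR p_ge0) eta_le.
  by rewrite nnegrE ltW.
by rewrite nnegrE ltW // rho_gt0.
Qed.

Lemma P_le_CS u : u \in Xs k -> P u <= C * S u.
Proof.
move=> uk; apply: le_trans (_ : C * Q u <= _); last first.
  by rewrite ler_wpM2l ?Q_le_S // ltW // C_gt0.
rewrite Q_eq ?(level_subset filling) // (par_id uk) mulrA ler_peMl ?(ltW (P_gt0 uk)) //.
by rewrite one_le_C_rho ?(level_subset filling).
Qed.

Lemma C_ge1 : 1 <= C.
Proof.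
have x0k := root_mem filling k; have := P_le_CS x0k.
have := children_mass x0k; have := P_gt0 x0k; have := C_gt0; nra.
Qed.

Lemma C2_ge1 : 1 <= C ^+ 2.
Proof. by rewrite expr_ge1 ?C_ge1 ?(ltW C_gt0). Qed.

Lemma m_gt0 u : u \in Xs k -> 0 < m u.
Proof. by move=> uk; rewrite divr_gt0 ?P_gt0 //; case: mu_pmf => mu_gt0 _; apply: mu_gt0. Qed.

Lemma m_le_near u v : u \in Xs k -> v \in Xs k -> d u v < lam * e -> m u <= C ^+ 2 * m v.
Proof.
move=> uk vk duv; have [-> | neq_uv] := eqVneq u v.
  by rewrite ler_peMl ?C2_ge1 // ltW // m_gt0.
by case: mu_balanced => _; apply => //; apply: D2_eq1_of_dist.
Qed.

Lemma m_le_par_path z v w : z \in Xs k -> w \in Xs k.+1 ->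
  d z v < B -> d v w < 2 * h -> m z <= C ^+ 2 * m (par w).
Proof.
move=> zk wk1 dzv dvw; apply: m_le_near => //; first exact: par_mem.
apply: le_lt_trans (dist_triangle d_metric z w (par w)) _.
apply: le_lt_trans (lerD (dist_triangle d_metric z v w) (lexx _)) _.
by apply: lt_le_trans dist_budget; rewrite !ltrD ?dist_par.
Qed.

Lemma dist_xx_lt_2h y : d y y < 2 * h.
Proof. by rewrite dist_xx // mulr_gt0 ?h_gt0. Qed.

Lemma m_le_par z y : z \in Xs k -> y \in Xs k.+1 -> d z y < B -> m z <= C ^+ 2 * m (par y).
Proof. by move=> zk yk1 dzy; apply: m_le_par_path dzy (dist_xx_lt_2h y). Qed.

Lemma dist_par_lt_B v w : v \in Xs k.+1 -> d v w < 2 * h -> d (par v) w < B.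
Proof.
move=> vk1 dvw; apply: le_lt_trans (dist_triangle d_metric _ v w) _.
by rewrite ltrD // (distC d_metric) dist_par.
Qed.

Let L := sort (relpre m <=%R) (Xs k).

Lemma uniq_L : uniq L. Proof. by rewrite sort_uniq (uniq_level filling). Qed.
Lemma mem_L u : (u \in L) = (u \in Xs k). Proof. by rewrite mem_sort. Qed.

Let feeds z y := (C * m (par y) < m z) && (d z y < B).

Lemma feeds_par_before z y : z \in Xs k -> y \in Xs k.+1 -> feeds z y ->
  (index (par y) L < index z L)%N.
Proof.
move=> zk yk1 /andP[lt_mz _]; apply: index_sort_lt => //; first exact: par_mem.
by apply: le_lt_trans lt_mz; rewrite ler_peMl ?C_ge1 // ltW // m_gt0 // par_mem.
Qed.

Let level_before (f : X -> R) u y :=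
  \big[Num.max/f (par y)]_(z <- L | feeds z y && (index z L < index u L)%N) (f z / C ^+ 2).

Let outflow (f : X -> R) u l := l * S u +
  \sum_(y <- Xs k.+1 | feeds u y) Num.max 0 (l / C ^+ 2 - level_before f u y) * Q y.

Lemma outflow_local f g u l : u \in Xs k ->
  {in L, forall z, (index z L < index u L)%N -> f z = g z} ->
  outflow f u l = outflow g u l.
Proof.
move=> uk fg; congr (_ + _).
rewrite big_seq_cond [RHS]big_seq_cond; apply: eq_bigr => y /andP[yk1 fuy].
congr (Num.max 0 (_ - _) * _).
rewrite /level_before fg ?mem_L ?par_mem ?(feeds_par_before uk yk1 fuy) //.
rewrite big_seq_cond [RHS]big_seq_cond; apply: eq_bigr => z /andP[zL /andP[_ lt_zu]].
by rewrite fg.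
Qed.

Lemma outflow_at_m f u : u \in Xs k ->
  {in L, forall z, (index z L < index u L)%N -> m z <= f z} ->
  outflow f u (m u) <= mu u.
Proof.
move=> uk f_ge; rewrite /outflow big1_seq ?addr0.
  rewrite /m -[leRHS](divfK (lt0r_neq0 (P_gt0 uk))).
  by rewrite ler_wpM2l ?children_mass // ltW // m_gt0.
move=> y /andP[fuy yk1]; have pyk := par_mem yk1.
suff le_level : m u / C ^+ 2 <= level_before f u y.
  by rewrite (max_idPl _) ?mul0r // subr_le0.
have m_py : m (par y) <= f (par y).
  by apply: f_ge; [rewrite mem_L | exact: feeds_par_before].
apply: le_trans (le_trans m_py (bigmax_ge_id _ _ _ _)).
rewrite ler_pdivrMr ?exprn_gt0 ?C_gt0 // mulrC.
by apply: m_le_par => //; case/andP: fuy.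
Qed.

Lemma mu_le_outflow_at_Cm f u : u \in Xs k -> mu u <= outflow f u (C * m u).
Proof.
move=> uk; apply: le_trans (_ : m u * (C * S u) <= _).
  rewrite -[leLHS](divfK (lt0r_neq0 (P_gt0 uk))).
  by rewrite ler_wpM2l ?P_le_CS // ltW // m_gt0.
rewrite mulrCA mulrA lerDl sumr_ge0 // => y _.
by rewrite mulr_ge0 ?powR_ge0 // le_max lexx.
Qed.

Lemma exists_levels : exists f : X -> R,
  {in Xs k, forall u, m u <= f u <= C * m u /\ outflow f u (f u) = mu u}.
Proof.
suff [f f_spec] : exists f : X -> R,
    {in L, forall u, m u <= f u <= C * m u /\ outflow f u (f u) = mu u}.
  by exists f => u; rewrite -mem_L; apply: f_spec.
apply: (@sequential_choice _ _ L 0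
  (fun f u l => m u <= l <= C * m u /\ outflow f u l = mu u) uniq_L).
  move=> f g u l uL fg [bnd out]; split=> //.
  by rewrite -(outflow_local _ _ fg) // -mem_L.
move=> f u uL earlier; have uk : u \in Xs k by rewrite -mem_L.
have cont : continuous (outflow f u) by exact: continuous_hinge_sum.
have lo_hi : m u <= C * m u by rewrite ler_peMl ?C_ge1 // ltW // m_gt0.
have bnds : outflow f u (m u) <= mu u <= outflow f u (C * m u).
  rewrite outflow_at_m ?mu_le_outflow_at_Cm // => z zL lt_zu.
  by case: (earlier z zL lt_zu) => /andP[].
by have [l] := continuous_ivt cont lo_hi bnds; exists l.
Qed.

Section Transport.
Variable f : X -> R.
Hypothesis f_bounds : {in Xs k, forall u, m u <= f u <= C * m u}.
Hypothesis f_outflow : {in Xs k, forall u, outflow f u (f u) = mu u}.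

Let m1 w := \big[Num.max/f (par w)]_(z <- L | feeds z w) (f z / C ^+ 2).

Lemma f_gt0 u : u \in Xs k -> 0 < f u.
Proof. by move=> uk; apply: lt_le_trans (m_gt0 uk) _; case/andP: (f_bounds uk). Qed.

Lemma m_par_le_m1 w : w \in Xs k.+1 -> m (par w) <= m1 w.
Proof.
move=> wk1; apply: le_trans (bigmax_ge_id _ _ _ _).
by case/andP: (f_bounds (par_mem wk1)).
Qed.

Lemma m1_gt0 w : w \in Xs k.+1 -> 0 < m1 w.
Proof. by move=> wk1; apply: lt_le_trans (m_par_le_m1 wk1); rewrite m_gt0 ?par_mem. Qed.

Lemma topup_le z v w : z \in Xs k -> w \in Xs k.+1 -> d z v < B -> d v w < 2 * h ->
  f z / C ^+ 2 <= C * m (par w).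
Proof.
move=> zk wk1 dzv dvw; have /andP[_ fz_le] := f_bounds zk.
rewrite ler_pdivrMr ?exprn_gt0 ?C_gt0 // -mulrA; apply: le_trans fz_le _.
by rewrite ler_wpM2l ?(ltW C_gt0) // mulrC (m_le_par_path zk wk1 dzv dvw).
Qed.

Lemma m1_le w : w \in Xs k.+1 -> m1 w <= C * m (par w).
Proof.
move=> wk1; rewrite /m1 big_seq_cond; apply: bigmax_le => [|z /andP[zL /andP[_ dzw]]].
  by case/andP: (f_bounds (par_mem wk1)).
by apply: topup_le dzw (dist_xx_lt_2h w) => //; rewrite -mem_L.
Qed.

Lemma f_par_le_m1 v w : v \in Xs k.+1 -> w \in Xs k.+1 -> d v w < 2 * h ->
  f (par v) <= C ^+ 2 * m1 w.
Proof.
move=> vk1 wk1 dvw; have pvk := par_mem vk1; have pwk := par_mem wk1.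
case fed: (feeds (par v) w).
  rewrite mulrC -ler_pdivrMr ?exprn_gt0 ?C_gt0 //.
  by apply: (le_bigmax_seq _ (par v) (feeds^~ w) (fun z => f z / C ^+ 2)); rewrite ?mem_L.
have {fed} : ~~ (C * m (par w) < m (par v)).
  by move: fed; rewrite /feeds dist_par_lt_B ?andbT // => /negbT.
rewrite -leNgt => le_mpv; have /andP[_ fpv_le] := f_bounds pvk.
apply: le_trans fpv_le _; rewrite expr2 -mulrA ler_wpM2l ?(ltW C_gt0) //.
by apply: le_trans le_mpv _; rewrite ler_wpM2l ?(ltW C_gt0) ?m_par_le_m1.
Qed.

Lemma m1_balanced v w : v \in Xs k.+1 -> w \in Xs k.+1 -> d v w < 2 * h ->
  m1 v <= C ^+ 2 * m1 w.
Proof.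
move=> vk1 wk1 dvw; rewrite {1}/m1 big_seq_cond.
apply: bigmax_le => [|z /andP[zL /andP[_ dzv]]]; first exact: f_par_le_m1.
apply: le_trans (topup_le _ wk1 dzv dvw) _; first by rewrite -mem_L.
rewrite expr2 -mulrA ler_wpM2l ?(ltW C_gt0) //.
apply: le_trans (m_par_le_m1 wk1) _.
by rewrite ler_peMl ?C_ge1 // ltW // m1_gt0.
Qed.

Let transport x y := if (x \in Xs k) && (y \in Xs k.+1) then
  ((par y == x)%:R * f x +
   (if feeds x y then Num.max 0 (f x / C ^+ 2 - level_before f x y) else 0)) * Q y
  else 0.

Lemma transport_ge0 x y : 0 <= transport x y.
Proof.
rewrite /transport; case: ifP => // /andP[xk _].
rewrite mulr_ge0 ?powR_ge0 // addr_ge0 ?mulr_ge0 ?ler0n ?(ltW (f_gt0 xk)) //.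
by case: ifP; rewrite ?le_max ?lexx.
Qed.

Lemma transport_support x y : transport x y != 0 -> x \in Xs k /\ y \in Xs k.+1.
Proof. by rewrite /transport; case: ifP => [/andP[] | _] //; rewrite eqxx. Qed.

Lemma transport_row x : x \in Xs k -> \sum_(y <- Xs k.+1) transport x y = mu x.
Proof.
move=> xk; rewrite -f_outflow // /outflow /S mulr_sumr.
rewrite [X in X + _]big_mkcond [X in _ + X]big_mkcond -big_split /=.
apply: eq_big_seq => y yk1.
rewrite /transport xk yk1 mulrDl; congr (_ + _).
  by case: eqP; rewrite ?mul1r ?mul0r.
by case: ifP; rewrite ?mul0r.
Qed.

Lemma transport_col y : y \in Xs k.+1 -> \sum_(x <- Xs k) transport x y = m1 y * Q y.
Proof.
move=> yk1; have pyk := par_mem yk1.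
have transport_y : {in Xs k, forall x, transport x y = ((par y == x)%:R * f x +
    (if feeds x y then Num.max 0 (f x / C ^+ 2 - level_before f x y) else 0)) * Q y}.
  by move=> x xk; rewrite /transport xk yk1.
rewrite (eq_big_seq _ transport_y) -mulr_suml big_split /= -big_mkcond.
rewrite (bigD1_seq (par y)) ?(uniq_level filling) //= eqxx mul1r big1 ?addr0; last first.
  by move=> x; rewrite eq_sym => /negbTE ->; rewrite mul0r.
have permL : perm_eq L (Xs k) by rewrite perm_sort.
by rewrite -(perm_big _ permL) telescope_bigmax ?uniq_L // addrC subrK.
Qed.

Lemma transport_near x y : transport x y != 0 -> d x y < B.
Proof.
move=> nz; have [xk yk1] := transport_support nz; move: nz.
rewrite /transport xk yk1 /=; have [<- _ | ne_px] := eqVneq (par y) x.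
  rewrite distC //; apply: lt_le_trans (dist_par yk1) _.
  by rewrite /B lerDl mulr_ge0 // ltW // h_gt0.
by rewrite mul0r add0r; case: ifP => [/andP[] // | _]; rewrite mul0r eqxx.
Qed.

Lemma next_level_of_levels : exists mu1 : X -> R,
  [/\ pos_pmf Xs k.+1 mu1, compatible Xs parent rho p C k mu mu1,
      balanced d Xs parent rho lam a p C k.+1 mu1 &
      exists gamma, coupling_near d Xs k mu mu1 ((1 + 2 * lam / a) * a ^- k) gamma].
Proof.
have mu1_density w : w \in Xs k.+1 ->
    m1 w * Q w / powR (pi_ parent rho w k.+1) p = m1 w.
  by move=> wk1; rewrite mulfK // lt0r_neq0 // Q_gt0.
have mu1_gt0 w : w \in Xs k.+1 -> 0 < m1 w * Q w.
  by move=> wk1; rewrite mulr_gt0 ?m1_gt0 ?Q_gt0.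
exists (fun w => m1 w * Q w); split.
- split=> //; rewrite -(eq_big_seq _ transport_col) exchange_big /=.
  by rewrite (eq_big_seq _ transport_row); case: mu_pmf.
- split=> // [u uk | v vk1]; first by case: mu_pmf => mu_gt0 _; apply: mu_gt0.
  by rewrite /= mu1_density // m_par_le_m1 // m1_le.
- split=> // u v uk1 vk1 /(D2_eq1_dist d_metric) duv.
  by rewrite !mu1_density // m1_balanced.
exists transport; rewrite B_eq; split.
- exact: transport_ge0.
- exact: transport_support.
- exact: transport_row.
- exact: transport_col.
- exact: transport_near.
Qed.

End Transport.

Lemma next_level : exists mu1 : X -> R,
  [/\ pos_pmf Xs k.+1 mu1, compatible Xs parent rho p C k mu mu1,
      balanced d Xs parent rho lam a p C k.+1 mu1 &
      exists gamma, coupling_near d Xs k mu mu1 ((1 + 2 * lam / a) * a ^- k) gamma].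
Proof.
have [f f_spec] := exists_levels.
by apply: (@next_level_of_levels f) => u /f_spec[].
Qed.

End NextLevel.

Theorem lemma3p11 (R : realType) (X : eqType) (d : X -> X -> R)
  (a lam : R) (x0 : X) (Xs : nat -> seq X) (parent : X -> nat -> X)
  (rho : X -> nat -> R) (eta_m eta_p p C : R) (k : nat) (mu_k : X -> R) :
  is_metric d -> d_compact d -> d_doubling d -> diam_eq d (2^-1) ->
  6 <= lam -> lam <= a ->
  hyperbolic_filling d a x0 Xs parent ->
  (* rho : S -> (0,oo) *)
  (forall n x, x \in Xs n -> 0 < rho x n) ->
  (* (H1) *)
  0 < eta_m -> eta_m <= eta_p -> eta_p < 1 ->
  (forall n x, x \in Xs n -> eta_m <= rho x n <= eta_p) ->
  (* (H4) *)
  (forall m n y, (m < n)%N -> y \in Xs m ->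
     \sum_(w <- Xs n | descendant parent w n y m)
        powR (pi_ parent rho w n) p <= powR (pi_ parent rho y m) p) ->
  powR eta_m (- p) <= C ->
  pos_pmf Xs k mu_k ->
  balanced d Xs parent rho lam a p C k mu_k ->
  exists mu_k1 : X -> R,
    [/\ pos_pmf Xs k.+1 mu_k1,
        compatible Xs parent rho p C k mu_k mu_k1,
        balanced d Xs parent rho lam a p C k.+1 mu_k1 &
        exists gamma : X -> X -> R,
          coupling_near d Xs k mu_k mu_k1
            ((1 + 2 * lam / a) * a ^- k) gamma].
Proof.
move=> d_metric _ _ _ lam_ge6 lam_le_a filling _ eta_m_gt0 _ eta_p_lt1 rho_bounds H4.
move=> C_ge mu_pmf mu_balanced.
apply: (next_level d_metric lam_ge6 lam_le_a filling eta_m_gt0 eta_p_lt1 rho_bounds C_ge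
  mu_pmf mu_balanced) => u uk.
under eq_bigl do rewrite -descendant_parent.
exact: H4.
Qed.
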